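(* Let $K_n=(V,E)$ be the complete graph and let $M_1,M_2$ be matchings in $K_n$ with $M_1\not\subseteq M_2$ and $M_2\not\subseteq M_1$. Then either the graph $(V,M_1\triangle M_2)$ has at most two (possibly trivial) connected components, or $\bm{c}=\chi(M_1)-\chi(M_2)$ is a circuit of the Matching polytope $P_{\mathrm{match}}(n)=\operatorname{conv}\{\chi(M): M\text{ a matching in }K_n\}$, with circuits taken with respect to the linear description $$\bm{x}(E[S])\le (|S|-1)/2 \ \text{for all } S\subseteq V,\ |S| \text{ odd},\ |S|\ge 3;\quad \bm{x}(\delta(v))\le 1\ \text{for all } v\in V;\quad \bm{x}\ge \bm{0}.$$
   Context: $\chi(M)\in\{0,1\}^E$ is the characteristic vector of $M$; $\triangle$ is symmetric difference; a trivial component is a single node; $E[S]$ is the set of edges with both endpoints in $S$, $\delta(v)$ the set of edges incident to $v$, $\bm{x}(F)=\sum_{e\in F}x_e$. Circuits: for a polytope $P=\{\bm{x}: B\bm{x}\le \bm{d}\}$ given by a fixed linear system, a nonzero vector $\bm{g}$ is a circuit of $P$ if $\operatorname{supp}(B\bm{g})$ is inclusion-minimal among the sets $\operatorname{supp}(B\bm{y})$ with $\bm{y}\neq\bm{0}$. *)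

From HB Require Import structures.
From mathcomp Require Import all_boot all_order all_algebra.
From mathcomp Require Import reals.
Set Implicit Arguments. Unset Strict Implicit. Unset Printing Implicit Defensive.
Import Order.TTheory GRing.Theory Num.Theory.
Local Open Scope ring_scope.

(* Edges of the complete graph K_n on V = 'I_n : the 2-element subsets of V. *)
Definition edge (n : nat) := {e : {set 'I_n} | #|e| == 2%N}.

Definition is_matching (n : nat) (M : {set edge n}) : Prop :=
  forall e f : edge n, e \in M -> f \in M -> e != f -> [disjoint val e & val f].

Definition symdiff (n : nat) (A B : {set edge n}) : {set edge n} :=
  (A :\: B) :|: (B :\: A).

Definition adj (n : nat) (F : {set edge n}) : rel 'I_n :=
  fun u v => [exists e in F, (u \in val e) && (v \in val e)] && (u != v).

(* Number of connected components (trivial ones included) of (V, F). *)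
Definition ncomp (n : nat) (F : {set edge n}) : nat :=
  n_comp (adj F) [set: 'I_n].

Definition chi (R : realType) (n : nat) (M : {set edge n}) : edge n -> R :=
  fun e => (e \in M)%:R.

(* Row indices of the linear system:
   inl (inl S) : x(E[S]) <= (|S|-1)/2 (only for |S| odd, |S| >= 3)
   inl (inr v) : x(delta(v)) <= 1
   inr e       : -x_e <= 0 *)
Definition row_index (n : nat) := ({set 'I_n} + 'I_n + edge n)%type.

Definition valid_row (n : nat) (r : row_index n) : bool :=
  match r with
  | inl (inl X) => odd #|X| && (3 <= #|X|)%N
  | _ => true
  end.

Definition Bmul (R : realType) (n : nat) (y : edge n -> R) (r : row_index n) : R :=
  match r with
  | inl (inl X) => \sum_(e : edge n | val e \subset X) y e
  | inl (inr v) => \sum_(e : edge n | v \in val e) y e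
  | inr e => - y e
  end.

Definition suppB (R : realType) (n : nat) (y : edge n -> R) : {set row_index n} :=
  [set r | valid_row r & Bmul y r != 0].

Definition is_circuit (R : realType) (n : nat) (g : edge n -> R) : Prop :=
  (exists e, g e != 0) /\
  ~ (exists y : edge n -> R, (exists e, y e != 0) /\ suppB y \proper suppB g).

From mathcomp Require Import all_boot all_order all_algebra.
From mathcomp Require Import reals.
From mathcomp Require Import zify.
Set Implicit Arguments. Unset Strict Implicit. Unset Printing Implicit Defensive.
Import GRing.Theory Num.Theory.
Local Open Scope ring_scope.

(* Write c = chi M1 - chi M2 (which is 1 or -1 on D = M1 △ M2 and 0 off D)
   and let supp(B y) ⊆ supp(B c).  The rows x_e >= 0 force y = 0 off D.  If a
   valid row meets D in exactly two edges e, f with c f = - c e, it vanishes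
   on c, hence on y, so y e * c e = y f * c f.  Such a row exists for adjacent
   edges of D (degrees in D are at most 2 and the two edges at a vertex
   alternate), and, when e and f lie in different components of (V, D), the
   5-set e ∪ f ∪ {w} with w in a third component works.  So y * c is constant
   on every component and across opposite signs; as both signs occur, it is
   constant on D, and y is a nonzero multiple of c. *)


Lemma big_pair_support (V : nmodType) (I : finType) (A : {pred I}) (P : pred I)
    (z : I -> V) (i j : I) :
  i != j -> P i -> P j -> (forall k, k \in A -> P k -> k = i \/ k = j) ->
  (forall k, k \notin A -> z k = 0) ->
  \sum_(k | P k) z k = z i + z j.
Proof.
move=> ij Pi Pj onlyij zA.
rewrite (bigD1 i) //= (bigD1 j) /=; last by rewrite Pj eq_sym.
rewrite big1 ?addr0 // => k /andP[/andP[Pk ki] kj]; apply: zA.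
by apply/negP => /onlyij /(_ Pk) [] /eqP; rewrite ?(negbTE ki) ?(negbTE kj).
Qed.

Lemma exists_third_root (T : finType) (e : rel T) (a : {pred T}) :
  (2 < n_comp e a)%N -> forall x z : T,
  exists w, fingraph.root e w != fingraph.root e x /\
            fingraph.root e w != fingraph.root e z.
Proof.
move=> ncomp3 x z.
pose r := fingraph.root e.
case: (pickP [pred w | roots e w & (w != r x) && (w != r z)]) => [w|none].
  by case/and3P => /eqP rw wx wz; exists w; rewrite rw.
suff : (n_comp e a <= #|[set r x; r z]|)%N by rewrite cards2; lia.
apply: subset_leq_card; apply/subsetP => w /andP[rw _].
by move: (none w); rewrite /= rw !inE; case: (w == r x); case: (w == r z).
Qed.

Lemma edgeP n (e : edge n) : exists u v, u != v /\ val e = [set u; v].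
Proof. exact/cards2P/(valP e). Qed.

Lemma edge_end n (e : edge n) : exists u, u \in val e.
Proof. by have [u [v [_ ->]]] := edgeP e; exists u; rewrite !inE eqxx. Qed.

Lemma edge_eq_of_subset n (e g : edge n) : val g \subset val e -> g = e.
Proof.
move=> ge; apply: val_inj; apply/eqP.
by rewrite eqEcard ge (eqP (valP e)) (eqP (valP g)).
Qed.

Lemma matching_eq n (M : {set edge n}) (e g : edge n) (u : 'I_n) :
  is_matching M -> e \in M -> g \in M -> u \in val e -> u \in val g -> e = g.
Proof.
move=> matchM eM gM ue ug; apply/eqP; apply: contraT => eg.
by move: (disjointFr (matchM _ _ eM gM eg) ue); rewrite ug.
Qed.

Lemma in_symdiff n (A B : {set edge n}) (e : edge n) :
  (e \in symdiff A B) = ((e \in A) != (e \in B)).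
Proof. by rewrite !inE; case: (e \in A); case: (e \in B). Qed.

Lemma adj_sym n (F : {set edge n}) : symmetric (adj F).
Proof.
move=> u v; rewrite /adj eq_sym; congr (_ && _).
by apply: eq_existsb => g; rewrite [(u \in _) && _]andbC.
Qed.

Section Components.

Variables (n : nat) (F : {set edge n}).

Local Notation comp := (fingraph.root (adj F)).

Lemma comp_edge e u v : e \in F -> u \in val e -> v \in val e -> comp u = comp v.
Proof.
move=> eF ue ve; apply/(fingraph.rootP (sym_connect_sym (adj_sym F))).
have [-> | uv] := eqVneq u v; first exact: connect0.
apply: connect1; rewrite /adj uv andbT.
by apply/existsP; exists e; rewrite eF ue ve.
Qed.

Variables (e f : edge n) (x z w : 'I_n).
Hypotheses (eF : e \in F) (fF : f \in F) (xe : x \in val e) (zf : z \in val f).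
Hypotheses (xz : comp x != comp z) (wx : comp w != comp x) (wz : comp w != comp z).

Let far_set := val e :|: val f :|: [set w].

Lemma edge_within_far_set g : g \in F -> val g \subset far_set -> g = e \/ g = f.
Proof.
move=> gF gS.
have classify t : t \in far_set ->
    [\/ comp t = comp x /\ t \in val e, comp t = comp z /\ t \in val f | t = w].
  rewrite !inE => /orP [/orP [te | tf] | /eqP ->]; last by apply: Or33.
  - by apply: Or31; split => //; apply: (comp_edge eF te xe).
  - by apply: Or32; split => //; apply: (comp_edge fF tf zf).
have [p [q [/eqP pq gpq]]] := edgeP g.
have pg : p \in val g by rewrite gpq !inE eqxx.
have qg : q \in val g by rewrite gpq !inE eqxx orbT.
have pq_comp := comp_edge gF pg qg.
have g_eq (h : edge n) : p \in val h -> q \in val h -> g = h.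
  move=> ph qh; apply: edge_eq_of_subset; apply/subsetP => t.
  by rewrite gpq !inE => /orP[] /eqP ->.
move/eqP: xz; move/eqP: wx; move/eqP: wz => wz' wx' xz'.
case: (classify p (subsetP gS p pg)) => [[pc pe] | [pc pf] | pw];
case: (classify q (subsetP gS q qg)) => [[qc qe] | [qc qf] | qw];
  try (exfalso; congruence).
- by left; apply: g_eq.
- by right; apply: g_eq.
Qed.

Lemma card_far_set : #|far_set| = 5%N.
Proof.
have ef0 : val e :&: val f = set0.
  apply/setP => t; rewrite !inE; apply/andP => -[te tf].
  by move: xz; rewrite -(comp_edge eF te xe) (comp_edge fF tf zf) eqxx.
have efw0 : (val e :|: val f) :&: [set w] = set0.
  apply/setP => t; rewrite !inE; apply/andP => -[/orP [te | tf] /eqP tw]; subst t.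
    by move: wx; rewrite (comp_edge eF te xe) eqxx.
  by move: wz; rewrite (comp_edge fF tf zf) eqxx.
rewrite /far_set cardsU efw0 cards0 subn0 cardsU ef0 cards0 subn0 cards1.
by rewrite (eqP (valP e)) (eqP (valP f)).
Qed.

End Components.

Lemma Bmul_scale (R : realType) n (y z : edge n -> R) (a : R) r :
  (forall e, y e = a * z e) -> Bmul y r = a * Bmul z r.
Proof.
move=> yz; case: r => [[X | v] | e] /=; rewrite ?mulr_sumr ?yz ?mulrN //;
  exact: eq_bigr.
Qed.

Lemma suppB_scale (R : realType) n (y z : edge n -> R) (a : R) :
  a != 0 -> (forall e, y e = a * z e) -> suppB y = suppB z.
Proof.
move=> a0 yz; apply/setP => r.
by rewrite !inE (Bmul_scale r yz) mulf_eq0 (negbTE a0).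
Qed.

Section MatchingDifference.

Variables (R : realType) (n : nat) (M1 M2 : {set edge n}).
Hypotheses (match1 : is_matching M1) (match2 : is_matching M2).

Local Notation D := (symdiff M1 M2).
Local Notation comp := (fingraph.root (adj D)).
Let c (e : edge n) : R := chi R M1 e - chi R M2 e.

Lemma c_notin e : e \notin D -> c e = 0.
Proof. by rewrite in_symdiff negbK /c /chi => /eqP ->; rewrite subrr. Qed.

Lemma c_in e : e \in D -> c e = if e \in M1 then 1 else -1.
Proof.
rewrite in_symdiff /c /chi.
by case: (e \in M1); case: (e \in M2); rewrite ?subr0 ?sub0r.
Qed.

Lemma c_sqr e : e \in D -> c e * c e = 1.
Proof. by move/c_in ->; case: (e \in M1); rewrite ?mulrNN mulr1. Qed.

Lemma symdiff_eq_at g h u : g \in D -> h \in D -> u \in val g -> u \in val h ->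
  (g \in M1) = (h \in M1) -> g = h.
Proof.
rewrite !in_symdiff => gD hD ug uh gh.
case gM1: (g \in M1) gh gD => /esym hM1 gD.
  exact: (matching_eq match1 _ _ ug uh).
by apply: (matching_eq match2 _ _ ug uh); [move: gD | move: hD; rewrite hM1];
  case: (_ \in M2).
Qed.

Lemma c_opp_at e f u : e \in D -> f \in D -> e != f -> u \in val e -> u \in val f ->
  c f = - c e.
Proof.
move=> eD fD ef ue uf; rewrite !c_in //.
case eM1: (e \in M1); case fM1: (f \in M1); rewrite ?opprK //;
  by case/eqP: ef; apply: (symdiff_eq_at eD fD ue uf); rewrite eM1 fM1.
Qed.

Lemma symdiff_deg2 e f u :
  e \in D -> f \in D -> e != f -> u \in val e -> u \in val f ->
  forall g, g \in D -> u \in val g -> g = e \/ g = f.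
Proof.
move=> eD fD ef ue uf g gD ug.
case: (boolP ((g \in M1) == (e \in M1))) => [/eqP ge | ge].
  by left; apply: (symdiff_eq_at gD eD ug ue ge).
right; apply: (symdiff_eq_at gD fD ug uf).
have: (e \in M1) != (f \in M1).
  by apply: contra ef => /eqP ef'; apply/eqP/(symdiff_eq_at eD fD ue uf).
by move: ge; case: (g \in M1); case: (e \in M1); case: (f \in M1).
Qed.

Lemma exists_opp_sign e : ~~ (M1 \subset M2) -> ~~ (M2 \subset M1) -> e \in D ->
  exists2 g, g \in D & c g = - c e.
Proof.
move=> n12 n21 eD; rewrite c_in //; case: (e \in M1).
  case/subsetPn: n21 => g gM2 gM1.
  have gD : g \in D by rewrite in_symdiff gM2 (negbTE gM1).
  by exists g; rewrite // c_in // (negbTE gM1).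
case/subsetPn: n12 => g gM1 gM2.
have gD : g \in D by rewrite in_symdiff gM1 (negbTE gM2).
by exists g; rewrite // c_in // gM1 opprK.
Qed.

Variable y : edge n -> R.
Hypothesis suppB_sub : suppB y \subset suppB c.

Let ratio e := y e * c e.

Lemma Bmul_eq0 r : valid_row r -> Bmul c r = 0 -> Bmul y r = 0.
Proof.
move=> vr cr; have := subsetP suppB_sub r; rewrite !inE vr cr eqxx /=.
by move=> yc; apply/eqP; apply: contraFT yc erefl.
Qed.

Lemma y_notin e : e \notin D -> y e = 0.
Proof.
move=> eD; apply/eqP; rewrite -oppr_eq0; apply/eqP.
by apply: (Bmul_eq0 (r := inr e)) => //=; rewrite c_notin ?oppr0.
Qed.

Lemma ratio_of_row r e f : valid_row r -> c f = - c e ->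
  (forall z : edge n -> R,
     (forall g, g \notin D -> z g = 0) -> Bmul z r = z e + z f) ->
  ratio e = ratio f.
Proof.
move=> vr cf Br.
have Bc : Bmul c r = 0 by rewrite Br ?cf ?addrN //; exact: c_notin.
have /eqP := Bmul_eq0 vr Bc; rewrite Br; last exact: y_notin.
by rewrite addr_eq0 => /eqP yf; rewrite /ratio yf cf mulNr mulrN.
Qed.

Lemma ratio_at_vertex e f u : e \in D -> f \in D -> u \in val e -> u \in val f ->
  ratio e = ratio f.
Proof.
move=> eD fD ue uf; have [-> // | ef] := eqVneq e f.
apply: (ratio_of_row (r := inl (inr u))) => //.
  exact: (c_opp_at eD fD ef ue uf).
move=> z z0; apply: (big_pair_support (A := D)) => // g.
exact: (symdiff_deg2 eD fD ef ue uf).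
Qed.

Lemma ratio_connect u v : connect (adj D) u v ->
  forall e f, e \in D -> f \in D -> u \in val e -> v \in val f -> ratio e = ratio f.
Proof.
case/connectP => p + -> {v}; elim: p u => [|w p IHp] u /=.
  by move=> _ e f eD fD ue uf; apply: (ratio_at_vertex eD fD ue uf).
case/andP => /andP [/existsP [g /andP [gD /andP [ug wg]]] _] wp e f eD fD ue uf.
by rewrite (ratio_at_vertex eD gD ue ug); apply: IHp wp g f gD fD wg uf.
Qed.

Lemma ratio_far e f x z w : e \in D -> f \in D -> x \in val e -> z \in val f ->
  comp x != comp z -> comp w != comp x -> comp w != comp z -> c f = - c e ->
  ratio e = ratio f.
Proof.
move=> eD fD xe zf xz wx wz cf.
pose S := val e :|: val f :|: [set w].
apply: (ratio_of_row (r := inl (inl S))) => //=.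
  by rewrite (card_far_set eD fD xe zf xz wx wz).
move=> s s0; apply: (big_pair_support (A := D)) => //.
- by apply: contra_neq xz => ef; rewrite ef in xe; apply: (comp_edge fD xe zf).
- by rewrite /S -setUA subsetUl.
- exact: subset_trans (subsetUr _ _) (subsetUl _ _).
- by move=> g gD; apply: (edge_within_far_set eD fD xe zf xz wx wz gD).
Qed.

Hypothesis three_comps : (2 < ncomp D)%N.

Lemma ratio_opp e f : e \in D -> f \in D -> c f = - c e -> ratio e = ratio f.
Proof.
move=> eD fD cf; have [x xe] := edge_end e; have [z zf] := edge_end f.
have [xz | xz] := eqVneq (comp x) (comp z).
  apply: (ratio_connect (u := x) (v := z)) => //.
  exact/(fingraph.rootP (sym_connect_sym (adj_sym D))).
have [w [wx wz]] := exists_third_root three_comps x z.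
exact: (ratio_far eD fD xe zf xz wx wz cf).
Qed.

Hypotheses (n12 : ~~ (M1 \subset M2)) (n21 : ~~ (M2 \subset M1)).

Lemma ratio_const e f : e \in D -> f \in D -> ratio e = ratio f.
Proof.
move=> eD fD; have [g gD cg] := exists_opp_sign n12 n21 eD.
have [cf | cf] : c f = - c e \/ c f = c e.
  by rewrite !c_in //; case: (e \in M1); case: (f \in M1); rewrite ?opprK; auto.
  exact: ratio_opp.
by rewrite (ratio_opp eD gD cg) (ratio_opp gD fD) // cf cg opprK.
Qed.

Lemma suppB_eq_of_sub : (exists e, y e != 0) -> suppB y = suppB c.
Proof.
case=> e0 ye0.
have e0D : e0 \in D by apply: contraTT ye0 => /y_notin ->; rewrite eqxx.
have y_scale g : y g = ratio e0 * c g.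
  have [gD | gD] := boolP (g \in D); last by rewrite y_notin // c_notin // mulr0.
  by rewrite (ratio_const e0D gD) /ratio -mulrA c_sqr // mulr1.
apply: (suppB_scale _ y_scale).
by apply: contraNneq ye0 => r0; rewrite y_scale r0 mul0r.
Qed.

End MatchingDifference.

Theorem lemma3 (R : realType) (n : nat) (M1 M2 : {set edge n}) :
  is_matching M1 -> is_matching M2 ->
  ~~ (M1 \subset M2) -> ~~ (M2 \subset M1) ->
  (ncomp (symdiff M1 M2) <= 2)%N \/
  is_circuit (fun e => chi R M1 e - chi R M2 e).
Proof.
move=> match1 match2 n12 n21.
have [|three_comps] := leqP (ncomp (symdiff M1 M2)) 2; [by left | right].
split.
  case/subsetPn: n12 => e eM1 eM2; exists e.
  by rewrite /chi eM1 (negbTE eM2) subr0 oner_eq0.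
case=> y [y_nz y_proper].
have supp_eq := suppB_eq_of_sub match1 match2 (proper_sub y_proper) three_comps
  n12 n21 y_nz.
by rewrite supp_eq properxx in y_proper.
Qed.
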